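(* Let $\mathfrak g=\mathfrak g(\mathfrak l,V,\mathfrak z,\beta)$ be admissible such that the representation of $\mathfrak l$ on $V$ is faithful. For every pointed closed convex cone $C_{\mathfrak z}\subseteq\mathfrak z$, the set $$W_{\mathfrak l}(C_{\mathfrak z})=\{x\in\mathfrak l:\ \forall v\in V:\ [v,[v,x]]\in C_{\mathfrak z}\}$$ is a pointed $\operatorname{Inn}(\mathfrak l)$-invariant closed convex cone in $\mathfrak l$.
   Context: In $\mathfrak g(\mathfrak l,V,\mathfrak z,\beta)=\mathfrak z\oplus V\oplus\mathfrak l$ the bracket is $[(z,v,x),(z',v',x')]=(\beta(v,v'),x.v'-x'.v,[x,x'])$, so for $v\in V$, $x\in\mathfrak l$: $[v,[v,x]]=\beta(x.v,v)$. Here $\mathfrak l$ is reductive, $V$ an $\mathfrak l$-module, $\beta$ skew-symmetric and $\mathfrak l$-invariant. $\mathfrak g$ is admissible if it contains an $\operatorname{Inn}(\mathfrak g)$-invariant pointed (no affine lines) generating (spanning) closed convex subset; standing fact: then $\mathfrak z=\mathfrak z(\mathfrak g)$ and there exist $f\in\mathfrak z^*$, $y\in\mathfrak l$ with $f\circ\beta$ symplectic and $v\mapsto f(\beta(y.v,v))$ positive definite (in particular for each $0\ne v\in V$ there is $w$ with $\beta(v,w)\ne0$). *)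

From HB Require Import structures.
From mathcomp Require Import all_boot all_order all_algebra.
From mathcomp Require Import all_classical all_reals all_analysis.

Set Implicit Arguments.
Unset Strict Implicit.
Unset Printing Implicit Defensive.

Import Order.TTheory GRing.Theory Num.Theory.
Import numFieldNormedType.Exports.
Local Open Scope classical_set_scope.
Local Open Scope ring_scope.

(* Finite-dimensional real vector spaces are modelled by coordinate spaces
   'rV[R]_n; linear maps act on row vectors on the right (u *m M). *)

Section Defs.
Variable R : realType.

Definition bilinear_map (n m k : nat)
  (f : 'rV[R]_n -> 'rV[R]_m -> 'rV[R]_k) : Prop :=
  (forall (a : R) u u' w, f (a *: u + u') w = a *: f u w + f u' w) /\
  (forall (a : R) u w w', f u (a *: w + w') = a *: f u w + f u w').

Definition is_lie_bracket (n : nat) (br : 'rV[R]_n -> 'rV[R]_n -> 'rV[R]_n)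
  : Prop :=
  [/\ bilinear_map br,
      (forall x, br x x = 0) &
      (forall x y z, br x (br y z) + br y (br z x) + br z (br x y) = 0)].

Definition is_subspace (n : nat) (S : set 'rV[R]_n) : Prop :=
  [/\ S 0, (forall u v, S u -> S v -> S (u + v)) &
      (forall (a : R) u, S u -> S (a *: u))].

Definition is_ideal (n : nat) (br : 'rV[R]_n -> 'rV[R]_n -> 'rV[R]_n)
  (I : set 'rV[R]_n) : Prop :=
  is_subspace I /\ (forall x y, I y -> I (br x y)).

(* reductive: the adjoint representation is semisimple, i.e. every ideal
   has a complementary ideal (Bourbaki's definition). *)
Definition reductive (n : nat) (br : 'rV[R]_n -> 'rV[R]_n -> 'rV[R]_n)
  : Prop :=
  is_lie_bracket br /\
  forall I, is_ideal br I ->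
    exists J, [/\ is_ideal br J,
                  (forall u, I u -> J u -> u = 0) &
                  (forall u, exists a b, [/\ I a, J b & u = a + b])].

Definition is_lie_module (n m : nat) (br : 'rV[R]_n -> 'rV[R]_n -> 'rV[R]_n)
  (act : 'rV[R]_n -> 'rV[R]_m -> 'rV[R]_m) : Prop :=
  bilinear_map act /\
  (forall x y v, act (br x y) v = act x (act y v) - act y (act x v)).

Definition faithful (n m : nat) (act : 'rV[R]_n -> 'rV[R]_m -> 'rV[R]_m)
  : Prop := forall x, (forall v, act x v = 0) -> x = 0.

Definition is_invariant_skew (n m k : nat)
  (act : 'rV[R]_n -> 'rV[R]_m -> 'rV[R]_m)
  (beta : 'rV[R]_m -> 'rV[R]_m -> 'rV[R]_k) : Prop :=
  [/\ bilinear_map beta,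
      (forall v w, beta v w = - beta w v) &
      (forall x v w, beta (act x v) w + beta v (act x w) = 0)].

Definition expmx (N : nat) (A : 'M[R]_N) : 'M[R]_N :=
  limn (fun p => \sum_(0 <= k < p) ((k`!)%:R^-1 *: A ^+ k)).

(* ad x as a matrix acting on row vectors: u *m ad br x = br x u *)
Definition ad (N : nat) (br : 'rV[R]_N -> 'rV[R]_N -> 'rV[R]_N)
  (x : 'rV[R]_N) : 'M[R]_N := lin1_mx (br x).

Inductive Inn (N : nat) (br : 'rV[R]_N -> 'rV[R]_N -> 'rV[R]_N)
  : 'M[R]_N -> Prop :=
  | Inn1 : Inn br 1%:M
  | InnExp : forall g x, Inn br g -> Inn br (g *m expmx (ad br x))
  | InnExpV : forall g x, Inn br g -> Inn br (g *m invmx (expmx (ad br x))).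

Definition Inn_invariant (N : nat) (br : 'rV[R]_N -> 'rV[R]_N -> 'rV[R]_N)
  (C : set 'rV[R]_N) : Prop :=
  forall g u, Inn br g -> C u -> C (u *m g).

Definition convex_set (N : nat) (C : set 'rV[R]_N) : Prop :=
  forall u v (t : R), C u -> C v -> 0 <= t -> t <= 1 ->
    C (t *: u + (1 - t) *: v).

(* pointed convex set: contains no affine line *)
Definition no_affine_line (N : nat) (C : set 'rV[R]_N) : Prop :=
  forall u d, (forall t : R, C (u + t *: d)) -> d = 0.

Definition spanning (N : nat) (C : set 'rV[R]_N) : Prop :=
  forall w, exists s : seq (R * 'rV[R]_N),
    (forall p, p \in s -> C p.2) /\ w = \sum_(p <- s) p.1 *: p.2.

Definition convex_cone (N : nat) (C : set 'rV[R]_N) : Prop :=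
  [/\ C 0, (forall u v, C u -> C v -> C (u + v)) &
      (forall (a : R) u, 0 <= a -> C u -> C (a *: u))].

Definition pointed_cone (N : nat) (C : set 'rV[R]_N) : Prop :=
  forall u, C u -> C (- u) -> u = 0.

Section G.
Variables (n m k : nat).
Variable br : 'rV[R]_n -> 'rV[R]_n -> 'rV[R]_n.
Variable act : 'rV[R]_n -> 'rV[R]_m -> 'rV[R]_m.
Variable beta : 'rV[R]_m -> 'rV[R]_m -> 'rV[R]_k.

Definition gz (X : 'rV[R]_(k + (m + n))) : 'rV[R]_k := lsubmx X.
Definition gV (X : 'rV[R]_(k + (m + n))) : 'rV[R]_m := lsubmx (rsubmx X).
Definition gl (X : 'rV[R]_(k + (m + n))) : 'rV[R]_n := rsubmx (rsubmx X).

Definition gtriple (z : 'rV[R]_k) (v : 'rV[R]_m) (x : 'rV[R]_n)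
  : 'rV[R]_(k + (m + n)) := row_mx z (row_mx v x).

Definition gbr (X Y : 'rV[R]_(k + (m + n))) : 'rV[R]_(k + (m + n)) :=
  gtriple (beta (gV X) (gV Y))
          (act (gl X) (gV Y) - act (gl Y) (gV X))
          (br (gl X) (gl Y)).

Definition admissible : Prop :=
  exists C : set 'rV[R]_(k + (m + n)),
    [/\ closed C, convex_set C, no_affine_line C, spanning C &
        Inn_invariant gbr C].

Definition W_l (Cz : set 'rV[R]_k) : set 'rV[R]_n :=
  [set x | forall v : 'rV[R]_m,
     exists2 c, Cz c &
       gbr (gtriple 0 v 0) (gbr (gtriple 0 v 0) (gtriple 0 0 x))
       = gtriple c 0 0].
End G.

End Defs.

From HB Require Import structures.
From mathcomp Require Import all_boot all_order all_algebra.
From mathcomp Require Import all_classical all_reals all_analysis.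
From mathcomp Require Import ring.

(* Write [[v, [v, x]]] = (beta(v, -x.v), 0, 0).  Then [W] is the intersection,
   over [v], of the preimages of [Cz] under the linear maps
   [x |-> beta(v, -x.v)], hence a closed convex cone.  For [y] in [l], the
   representation [rho] of [l] on [V] turns [e^(ad y)] into conjugation by
   [e^(rho y)], and [e^(-rho y)] is the [beta]-adjoint of [e^(rho y)]; so
   [x e^(ad y)] lies in [W] because [x] does, with [v] replaced by
   [v e^(-rho y)].
   Pointedness: if [x] and [-x] lie in [W], then [beta(v, x.v) = 0] for all
   [v], so [x] maps [V] into the radical of [beta].  In an admissible algebra
   every [X] with [(ad X)^2 = 0] is central, since [e^(t ad X) = 1 + t ad X]
   preserves a pointed generating set.  For [X = (0, u, 0)] with [u] in the
   radical this shows that [l] kills the radical; so the elements acting into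
   the radical form an ideal, which reductivity complements by an ideal [J].
   Faithfulness then makes [x] central in [l], [(0, 0, x)] has [(ad)^2 = 0],
   and faithfulness once more gives [x = 0]. *)

Set Implicit Arguments.
Unset Strict Implicit.
Unset Printing Implicit Defensive.

Import Order.TTheory GRing.Theory Num.Theory.
Import numFieldNormedType.Exports.
Local Open Scope classical_set_scope.
Local Open Scope ring_scope.

Section LinearFun.
Variables (R : pzRingType) (U V : lmodType R) (f : U -> V).
Hypothesis f_lin : linear f.

Definition linear_pack : {linear U -> V} :=
  HB.pack f (GRing.isLinear.Build _ _ _ _ f f_lin).

Lemma lin_sum I (r : seq I) (P : pred I) (F : I -> U) :
  f (\sum_(i <- r | P i) F i) = \sum_(i <- r | P i) f (F i).
Proof. exact: (linear_sum linear_pack). Qed.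
Lemma linZ a u : f (a *: u) = a *: f u. Proof. exact: (linearZZ linear_pack). Qed.
Lemma lin0 : f 0 = 0. Proof. exact: (linear0 linear_pack). Qed.
Lemma linD u v : f (u + v) = f u + f v. Proof. exact: (linearD linear_pack). Qed.
Lemma linN u : f (- u) = - f u. Proof. exact: (linearN linear_pack). Qed.
Lemma linB u v : f (u - v) = f u - f v. Proof. exact: (linearB linear_pack). Qed.

End LinearFun.

Section BilinearMap.
Variables (R : realType) (a b c : nat) (f : 'rV[R]_a -> 'rV[R]_b -> 'rV[R]_c).
Hypothesis f_bilin : bilinear_map f.

Lemma bilin_linl w : linear (f^~ w).
Proof. by case: f_bilin => H _ x u u'; exact: H. Qed.
Lemma bilin_linr u : linear (f u).
Proof. by case: f_bilin => _ H x w w'; exact: H. Qed.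
Lemma bilin0l w : f 0 w = 0. Proof. exact: lin0 (bilin_linl w). Qed.
Lemma bilin0r u : f u 0 = 0. Proof. exact: lin0 (bilin_linr u). Qed.
Lemma bilinNl u w : f (- u) w = - f u w. Proof. by rewrite (linN (bilin_linl w)). Qed.
Lemma bilinNr u w : f u (- w) = - f u w. Proof. by rewrite (linN (bilin_linr u)). Qed.
Lemma bilinDl u u' w : f (u + u') w = f u w + f u' w.
Proof. by rewrite (linD (bilin_linl w)). Qed.
Lemma bilinDr u w w' : f u (w + w') = f u w + f u w'.
Proof. by rewrite (linD (bilin_linr u)). Qed.
Lemma bilinZl x u w : f (x *: u) w = x *: f u w.
Proof. by rewrite (linZ (bilin_linl w)). Qed.
Lemma bilinZr x u w : f u (x *: w) = x *: f u w.
Proof. by rewrite (linZ (bilin_linr u)). Qed.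

End BilinearMap.

Section MatrixNorm.
Variable R : realType.

Lemma mx_entry_le_norm (a b : nat) (M : 'M[R]_(a, b)) i j : `|M i j| <= `|M|.
Proof.
rewrite [leRHS]/Num.Def.normr /= mx_normrE; apply/bigmax_geP; right => /=.
by exists (i, j).
Qed.

Lemma mx_norm_le_entries (a b : nat) (M : 'M[R]_(a, b)) c :
  0 <= c -> (forall i j, `|M i j| <= c) -> `|M| <= c.
Proof.
move=> c0 Mc; rewrite [leLHS]/Num.Def.normr /= mx_normrE.
by apply/bigmax_leP; split => // -[i j] _ /=; exact: Mc.
Qed.

Lemma mx_normM (a b c : nat) (P : 'M[R]_(a, b)) (Q : 'M[R]_(b, c)) :
  `|P *m Q| <= b%:R * `|P| * `|Q|.
Proof.
apply: mx_norm_le_entries; first by rewrite !mulr_ge0.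
move=> i l; rewrite mxE; apply: le_trans (ler_norm_sum _ _ _) _.
apply: le_trans (_ : \sum_(j < b) (`|P| * `|Q|) <= _).
  by apply: ler_sum => j _; rewrite normrM ler_pM ?mx_entry_le_norm.
by rewrite sumr_const card_ord -mulrA mulr_natl.
Qed.

Lemma mx_norm_exp N (A : 'M[R]_N) k : `|A ^+ k| <= (N%:R * `|A|) ^+ k.
Proof.
elim: k => [|k IH].
  rewrite !expr0; apply: mx_norm_le_entries => // i j; rewrite !mxE.
  by case: (i == j); rewrite ?normr1 ?normr0.
rewrite exprS -mulmxE exprS; apply: le_trans (mx_normM _ _) _.
by apply: ler_wpM2l IH; rewrite mulr_ge0.
Qed.

Lemma linear_mx_bounded (a b : nat) (V : normedModType R)
    (f : 'M[R]_(a, b) -> V) :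
  linear f -> exists2 K, 0 <= K & forall M, `|f M| <= K * `|M|.
Proof.
move=> f_lin; exists (\sum_i `|f (delta_mx i.1 i.2)|).
  by apply: sumr_ge0 => i _.
move=> M; rewrite {1}(matrix_sum_delta M) pair_bigA /= (lin_sum f_lin).
rewrite mulr_suml; apply: le_trans (ler_norm_sum _ _ _) _.
apply: ler_sum => -[i j] _ /=; rewrite (linZ f_lin) normrZ mulrC.
by rewrite ler_wpM2l ?mx_entry_le_norm.
Qed.

Lemma linear_mx_continuous (a b : nat) (V : normedModType R)
    (f : 'M[R]_(a, b) -> V) :
  linear f -> continuous f.
Proof.
move=> f_lin; have [K _ fK] := linear_mx_bounded f_lin.
apply: (@bounded_linear_continuous _ _ _ (linear_pack f_lin)).
apply/linear_boundedP; near=> r => M /=.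
apply: le_trans (fK M) _; apply: ler_wpM2r; first by [].
near: r; apply: nbhs_pinfty_ge; exact: num_real.
Unshelve. all: by end_near. Qed.

Lemma bilinear_mx_bounded (a b c d : nat) (V : normedModType R)
    (f : 'M[R]_(a, b) -> 'M[R]_(c, d) -> V) :
  (forall Q, linear (f^~ Q)) -> (forall P, linear (f P)) ->
  exists2 K, 0 <= K & forall P Q, `|f P Q| <= K * `|P| * `|Q|.
Proof.
move=> fl fr.
have /choice[Kf Kf_bound] i : exists K, 0 <= K /\
    forall Q, `|f (delta_mx i.1 i.2) Q| <= K * `|Q|.
  by have [K K0 HK] := linear_mx_bounded (fr (delta_mx i.1 i.2)); exists K.
exists (\sum_i Kf i); first by apply: sumr_ge0 => i _; case: (Kf_bound i).
move=> P Q; rewrite {1}(matrix_sum_delta P) pair_bigA /= (lin_sum (fl Q)).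
rewrite !mulr_suml; apply: le_trans (ler_norm_sum _ _ _) _.
apply: ler_sum => -[i j] _ /=; rewrite (linZ (fl Q)) normrZ.
have [_ HK] := Kf_bound (i, j).
apply: le_trans (_ : `|P| * (Kf (i, j) * `|Q|) <= _).
  by rewrite ler_pM ?mx_entry_le_norm ?HK.
by rewrite mulrCA mulrA.
Qed.

End MatrixNorm.

(* Not inferred for square matrices otherwise; needed by [normed_cvg]. *)
HB.instance Definition _ (R : realType) N := Complete.on 'M[R]_N.

Lemma sum_square_triangle (V : zmodType) (G : nat -> nat -> V) p :
  \sum_(0 <= a < p) \sum_(0 <= b < p) G a b =
  \sum_(0 <= j < p) \sum_(0 <= a < j.+1) G a (j - a)%N +
  \sum_(0 <= a < p) \sum_(p - a <= b < p) G a b.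
Proof.
have split_row a : \sum_(0 <= b < p) G a b =
    \sum_(0 <= b < p - a) G a b + \sum_(p - a <= b < p) G a b.
  by rewrite -big_cat_nat // leq_subr.
rewrite (eq_bigr _ (fun a _ => split_row a)) big_split /=; congr (_ + _).
elim: p {split_row} => [|p IH]; first by rewrite !big_geq.
rewrite big_nat_recr //= subSnn big_nat1 [in RHS]big_nat_recr //=.
have -> : \sum_(0 <= a < p) \sum_(0 <= b < p.+1 - a) G a b =
    \sum_(0 <= a < p) (\sum_(0 <= b < p - a) G a b + G a (p - a)%N).
  by apply: eq_big_nat => a /andP[_ ap]; rewrite subSn ?(ltnW ap) // big_nat_recr.
by rewrite big_split /= IH [X in _ = _ + X]big_nat_recr //= subnn addrA.
Qed.

Lemma fact_inv_binomial (F : numFieldType) (j a : nat) : (a <= j)%N ->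
  (j`!)%:R^-1 * 'C(j, a)%:R = (a`!)%:R^-1 * ((j - a)`!)%:R^-1 :> F.
Proof.
move=> aj; have fact_neq0 i : (i`!)%:R != 0 :> F by rewrite pnatr_eq0 -lt0n fact_gt0.
rewrite -(bin_fact aj) !natrM; field.
by rewrite !fact_neq0 pnatr_eq0 -lt0n bin_gt0 aj.
Qed.

Section ExpSeries.
Variable R : realType.

Lemma exp_coeff_convolution (x y : R) j :
  \sum_(0 <= a < j.+1) exp_coeff x a * exp_coeff y (j - a)%N =
  exp_coeff (x + y) j.
Proof.
rewrite /exp_coeff /= addrC exprDn big_mkord mulr_suml.
apply: eq_bigr => -[a /=]; rewrite ltnS => aj _.
rewrite -[_ *+ 'C(j, a)]mulr_natr.
transitivity ((a`!)%:R^-1 * ((j - a)`!)%:R^-1 * (x ^+ a * y ^+ (j - a))); first by ring.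
by rewrite -fact_inv_binomial //; ring.
Qed.

Lemma exp_coeff_square_tail (x y : R) p :
  \sum_(0 <= a < p) \sum_(p - a <= b < p) exp_coeff x a * exp_coeff y b =
  series (exp_coeff x) p * series (exp_coeff y) p - series (exp_coeff (x + y)) p.
Proof.
have -> : series (exp_coeff x) p * series (exp_coeff y) p =
    \sum_(0 <= a < p) \sum_(0 <= b < p) exp_coeff x a * exp_coeff y b.
  by rewrite /series /= mulr_suml; apply: eq_bigr => a _; rewrite mulr_sumr.
rewrite sum_square_triangle /series /=.
under [X in X + _ - _]eq_bigr do rewrite exp_coeff_convolution.
by rewrite addrAC subrr add0r.
Qed.

Lemma cvg_exp_coeff_square_tail (x y : R) :
  (fun p => series (exp_coeff x) p * series (exp_coeff y) p -
            series (exp_coeff (x + y)) p) @ \oo --> 0.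
Proof.
rewrite -(subrr (expR (x + y))) [X in _ --> X - _]expRD.
exact: cvgB (cvgM (is_cvg_series_exp_coeff x) (is_cvg_series_exp_coeff y))
  (is_cvg_series_exp_coeff (x + y)).
Qed.

End ExpSeries.

Section MatrixExp.
Variable R : realType.

Lemma cvg0_norm_le (V : normedModType R) (u : nat -> V) (r : nat -> R) :
  (forall p, `|u p| <= r p) -> r @ \oo --> 0 -> u @ \oo --> 0.
Proof.
move=> ur r0; apply: norm_cvg0.
apply: (@squeeze_cvgr _ _ _ _ (fun=> 0) r); [|exact: cvg_cst|exact: r0].
by near=> p; rewrite normr_ge0 ur.
Unshelve. all: by end_near. Qed.

Lemma bilinear_mx_cvg N1 N2 (V : normedModType R)
    (Phi : 'M[R]_N1 -> 'M[R]_N2 -> V)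
    (u : nat -> 'M[R]_N1) (v : nat -> 'M[R]_N2) a b :
  (forall Q, linear (Phi^~ Q)) -> (forall P, linear (Phi P)) ->
  u @ \oo --> a -> v @ \oo --> b -> (fun p => Phi (u p) (v p)) @ \oo --> Phi a b.
Proof.
move=> fl fr ua vb; have [K _ PhiK] := bilinear_mx_bounded fl fr.
have split_diff P Q :
    Phi P Q - Phi a b = Phi (P - a) (Q - b) + Phi (P - a) b + Phi a (Q - b).
  by rewrite -(linD (fr _)) subrK (linB (fl _)) (linB (fr _)) addrA subrK.
apply/subr_cvg0/(cvg0_norm_le (r := fun p => K * (`|u p - a| * `|v p - b| +
    `|u p - a| * `|b| + `|a| * `|v p - b|))) => [p|].
  rewrite split_diff !mulrDr !mulrA; apply: le_trans (ler_normD _ _) _.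
  by rewrite lerD ?PhiK //; apply: le_trans (ler_normD _ _) _; rewrite lerD ?PhiK.
have dA : (fun p => `|u p - a|) @ \oo --> 0 by apply/norm_cvg0P/subr_cvg0.
have dB : (fun p => `|v p - b|) @ \oo --> 0 by apply/norm_cvg0P/subr_cvg0.
have := cvgM (cvg_cst K) (cvgD (cvgD (cvgM dA dB) (cvgM dA (cvg_cst `|b|)))
  (cvgM (cvg_cst `|a|) dB)).
by rewrite !(mul0r, mulr0, addr0); exact.
Qed.

Definition expmx_term N (A : 'M[R]_N) k := (k`!)%:R^-1 *: A ^+ k.

Lemma expmx_term_norm N (A : 'M[R]_N) k :
  `|expmx_term A k| <= exp_coeff (N%:R * `|A|) k.
Proof.
rewrite /expmx_term exp_coeffE normrZ ger0_norm ?invr_ge0 //.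
by rewrite ler_wpM2l ?invr_ge0 ?mx_norm_exp.
Qed.

Lemma expmx_cvg N (A : 'M[R]_N) : series (expmx_term A) @ \oo --> expmx A.
Proof.
apply: normed_cvg.
apply: (series_le_cvg _ _ _ (is_cvg_series_exp_coeff (N%:R * `|A|))) => k.
- exact: normr_ge0.
- by apply: exp_coeff_ge0; rewrite mulr_ge0.
- exact: expmx_term_norm.
Qed.

Lemma linear_expmx_cvg N (V : normedModType R) (f : 'M[R]_N -> V) A :
  linear f -> series (f \o expmx_term A) @ \oo --> f (expmx A).
Proof.
move=> f_lin; have -> : series (f \o expmx_term A) = f \o series (expmx_term A).
  by apply: funext => p; rewrite /series /= (lin_sum f_lin).
apply: continuous_cvg; [exact: linear_mx_continuous | exact: expmx_cvg].
Qed.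

Lemma bilinear_expmx_cvg N1 N2 (V : normedModType R)
    (Phi : 'M[R]_N1 -> 'M[R]_N2 -> V) (A : 'M[R]_N1) (B : 'M[R]_N2) :
  (forall Q, linear (Phi^~ Q)) -> (forall P, linear (Phi P)) ->
  series (fun j => \sum_(0 <= a < j.+1) Phi (expmx_term A a) (expmx_term B (j - a)))
    @ \oo --> Phi (expmx A) (expmx B).
Proof.
move=> fl fr; have [K K0 PhiK] := bilinear_mx_bounded fl fr.
pose tail p := \sum_(0 <= a < p) \sum_(p - a <= b < p)
  Phi (expmx_term A a) (expmx_term B b).
have -> : series (fun j => \sum_(0 <= a < j.+1)
    Phi (expmx_term A a) (expmx_term B (j - a))) =
    (fun p => Phi (series (expmx_term A) p) (series (expmx_term B) p) - tail p).
  apply: funext => p; rewrite /series /= (lin_sum (fl _)).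
  rewrite [X in X - _](eq_bigr _ (fun a _ => lin_sum (fr (expmx_term A a)) _ _ _)).
  by rewrite sum_square_triangle addrK.
rewrite -[Phi _ _]subr0; apply: cvgB.
  by apply: (bilinear_mx_cvg fl fr); apply: expmx_cvg.
pose al := N1%:R * `|A|; pose be := N2%:R * `|B|.
apply: (cvg0_norm_le (r := fun p => K * (series (exp_coeff al) p *
  series (exp_coeff be) p - series (exp_coeff (al + be)) p))); last first.
  by rewrite -(mulr0 K); apply: cvgM (cvg_cst _) (cvg_exp_coeff_square_tail _ _).
move=> p; rewrite -exp_coeff_square_tail mulr_sumr.
apply: le_trans (ler_norm_sum _ _ _) _; apply: ler_sum => a _.
rewrite mulr_sumr; apply: le_trans (ler_norm_sum _ _ _) _; apply: ler_sum => b _.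
apply: le_trans (PhiK _ _) _; rewrite -mulrA ler_wpM2l //.
by rewrite ler_pM ?expmx_term_norm.
Qed.

End MatrixExp.

Section ExpmxAlgebra.
Variable R : realType.

Lemma expmx_termNM N (A : 'M[R]_N) a b :
  expmx_term A a *m expmx_term (- A) b =
  (exp_coeff 1 a * exp_coeff (-1) b) *: A ^+ (a + b).
Proof.
have exprN c : (- A) ^+ c = (-1) ^+ c *: A ^+ c.
  elim: c => [|c IH]; first by rewrite !expr0 scale1r.
  by rewrite !exprSr IH -!mulmxE -scalemxAl mulmxN scalerN -scaleNr mulrN1.
rewrite /expmx_term !exp_coeffE expr1n mulr1 exprN.
by rewrite -scalemxAl -!scalemxAr scalerA mulmxE -exprD scalerA mulrA.
Qed.

Lemma expmxN_mul N (A : 'M[R]_N) : expmx A *m expmx (- A) = 1%:M.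
Proof.
have fl Q : linear (@mulmx R N N N ^~ Q) by move=> c P P'; rewrite mulmxDl scalemxAl.
have fr P : linear (@mulmx R N N N P) by move=> c Q Q'; rewrite mulmxDr scalemxAr.
have := bilinear_expmx_cvg (A := A) (B := - A) fl fr.
set S := series _ => S_cvg.
rewrite -(cvg_lim (@norm_hausdorff _ _) S_cvg).
apply: (lim_near_cst (@norm_hausdorff _ _)); near=> p.
have p_gt0 : (0 < p)%N by near: p; exists 1%N.
rewrite /S /series /= -(prednK p_gt0) big_nat_recl // [X in _ + X]big1 ?addr0.
  by rewrite big_nat1 /expmx_term fact0 invr1 !scale1r !expr0 mulmx1.
move=> j _; under eq_big_nat => a /andP[_ aj] do rewrite expmx_termNM subnKC //.
by rewrite -scaler_suml exp_coeff_convolution subrr exp_coeffE expr0n mulr0 scale0r.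
Unshelve. all: by end_near. Qed.

Lemma invmx_expmx N (A : 'M[R]_N) : invmx (expmx A) = expmx (- A).
Proof.
have [A_unit _] := mulmx1_unit (expmxN_mul A).
by rewrite -[RHS](mulKmx A_unit) expmxN_mul mulmx1.
Qed.

Lemma expmx_sqr0 N (M : 'M[R]_N) : M *m M = 0 -> expmx M = 1%:M + M.
Proof.
move=> MM0; apply: (lim_near_cst (@norm_hausdorff _ _)); near=> p.
have p_ge2 : (2 <= p)%N by near: p; exists 2%N.
rewrite -(subnK p_ge2) addn2 big_nat_recl // big_nat_recl // big1 ?addr0.
  by rewrite fact0 invr1 !scale1r expr0 expr1.
move=> i _; rewrite -addn2 exprD expr2 -!mulmxE MM0 mulmx0.
by rewrite scaler0.
Unshelve. all: by end_near. Qed.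

End ExpmxAlgebra.

Lemma sum_binomial_pascal (R : pzRingType) (V : lmodType R) (G : nat -> V) j :
  \sum_(0 <= a < j.+2) 'C(j.+1, a)%:R *: G a =
  \sum_(0 <= a < j.+1) 'C(j, a)%:R *: G a + \sum_(0 <= a < j.+1) 'C(j, a)%:R *: G a.+1.
Proof.
rewrite big_nat_recl // bin0.
under eq_bigr do rewrite binS natrD scalerDl.
rewrite big_split /= [X in _ + (X + _)]big_nat_recr //= bin_small // scale0r addr0.
by rewrite [in RHS]big_nat_recl // !bin0 addrA.
Qed.

(* [S |-> S B - B S] is the sum of the commuting operators [S |-> S B] and
   [S |-> -B S]. *)
Lemma iter_commutator (R : comPzRingType) N (B T : 'M[R]_N) j :
  iter j (fun S => S *m B - B *m S) T =
  \sum_(0 <= a < j.+1) 'C(j, a)%:R *: ((- B) ^+ a *m T *m B ^+ (j - a)).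
Proof.
elim: j => [|j IH]; first by rewrite big_nat1 !expr0 mul1mx mulmx1 bin0 scale1r.
rewrite iterS IH sum_binomial_pascal mulmx_suml mulmx_sumr -sumrN.
congr (_ + _); apply: eq_big_nat => a /andP[_ aj].
  by rewrite -scalemxAl -!mulmxA -[B ^+ _ *m B]/(B ^+ _ * B) -exprSr subSn.
by rewrite -scalemxAr -scalerN subSS exprS -mulNmx !mulmxA.
Qed.

Lemma bilinear_adjoint_expmx (R : realType) a b c
    (f : 'rV[R]_a -> 'rV[R]_b -> 'rV[R]_c) (P : 'M[R]_a) (Q : 'M[R]_b) :
  bilinear_map f -> (forall u w, f (u *m P) w = f u (w *m Q)) ->
  forall u w, f (u *m expmx P) w = f u (w *m expmx Q).
Proof.
move=> f_bilin adjPQ u w.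
pose fP M := f (u *m M) w; pose fQ M := f u (w *m M).
have fP_lin : linear fP.
  by move=> t M M'; rewrite /fP mulmxDr -scalemxAr (bilin_linl f_bilin).
have fQ_lin : linear fQ.
  by move=> t M M'; rewrite /fQ mulmxDr -scalemxAr (bilin_linr f_bilin).
have adj_pow i : fP (P ^+ i) = fQ (Q ^+ i).
  rewrite /fP /fQ; elim: i u w {fP fQ fP_lin fQ_lin} => [|i IH] u w.
    by rewrite !expr0 !mulmx1.
  rewrite exprSr -[_ * P]/(_ *m P) mulmxA adjPQ IH -mulmxA.
  by rewrite -[Q *m _]/(Q * _) -exprS.
have series_eq : series (fP \o expmx_term P) = series (fQ \o expmx_term Q).
  apply: funext => p; rewrite /series /=; apply: eq_bigr => i _.
  by rewrite /expmx_term (linZ fP_lin) (linZ fQ_lin) adj_pow.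
have := linear_expmx_cvg (A := P) fP_lin; rewrite series_eq => fP_cvg.
rewrite -[LHS]/(fP (expmx P)) -[RHS]/(fQ (expmx Q)).
rewrite -(cvg_lim (@norm_hausdorff _ _) fP_cvg).
by rewrite (cvg_lim (@norm_hausdorff _ _) (linear_expmx_cvg (A := Q) fQ_lin)).
Qed.

Lemma unipotent_invariant_trivial (R : realType) N (C : set 'rV[R]_N)
    (M : 'M[R]_N) :
  no_affine_line C -> spanning C ->
  (forall (t : R) u, C u -> C (u *m (1%:M + t *: M))) -> M = 0.
Proof.
move=> C_noline C_span C_inv.
have CM u : C u -> u *m M = 0.
  move=> Cu; apply: (C_noline u) => t.
  by rewrite scalemxAr -[u in u + _]mulmx1 -mulmxDr; apply: C_inv.
apply/row_matrixP => i; rewrite row0 rowE.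
have [s [sC ->]] := C_span (delta_mx 0 i).
rewrite mulmx_suml big_seq big1 // => -[a u] /sC /= Cu.
by rewrite -scalemxAl CM ?scaler0.
Qed.

Lemma adE (R : realType) N (b : 'rV[R]_N -> 'rV[R]_N -> 'rV[R]_N) x u :
  linear (b x) -> u *m ad b x = b x u.
Proof. by move=> bx_lin; rewrite /ad (mul_rV_lin1 (linear_pack bx_lin)). Qed.

Lemma adN (R : realType) N (b : 'rV[R]_N -> 'rV[R]_N -> 'rV[R]_N) x :
  bilinear_map b -> ad b (- x) = - ad b x.
Proof.
move=> b_bilin; apply/row_matrixP => i.
by rewrite !rowE mulmxN !(adE _ (bilin_linr b_bilin _)) (bilinNl b_bilin).
Qed.

Section LieAlgebraG.
Variables (R : realType) (n m k : nat).
Variables (br : 'rV[R]_n -> 'rV[R]_n -> 'rV[R]_n)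
  (act : 'rV[R]_n -> 'rV[R]_m -> 'rV[R]_m)
  (beta : 'rV[R]_m -> 'rV[R]_m -> 'rV[R]_k).
Hypotheses (br_bilin : bilinear_map br) (act_bilin : bilinear_map act)
  (beta_bilin : bilinear_map beta).
Local Notation gb := (gbr br act beta).
Local Notation gt := (@gtriple R n m k).

Lemma gVK z v x : gV (gt z v x) = v. Proof. by rewrite /gV row_mxKr row_mxKl. Qed.
Lemma glK z v x : gl (gt z v x) = x. Proof. by rewrite /gl !row_mxKr. Qed.

Lemma gtripleK X : gt (gz X) (gV X) (gl X) = X.
Proof. by rewrite /gtriple /gV /gl hsubmxK /gz hsubmxK. Qed.

Lemma gtriple_inj z v x z' v' x' :
  gt z v x = gt z' v' x' -> [/\ z = z', v = v' & x = x'].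
Proof. by move=> /eq_row_mx [-> /eq_row_mx [-> ->]]. Qed.

Lemma gtriple0 : gt 0 0 0 = 0. Proof. by rewrite /gtriple !row_mx0. Qed.

Lemma gtripleP (a : R) z v x z' v' x' :
  gt (a *: z + z') (a *: v + v') (a *: x + x') = a *: gt z v x + gt z' v' x'.
Proof. by rewrite /gtriple !scale_row_mx !add_row_mx. Qed.

Lemma gV_linear : linear (@gV R n m k).
Proof. by move=> a Y Y'; rewrite -{1}[Y]gtripleK -{1}[Y']gtripleK -gtripleP gVK. Qed.

Lemma gl_linear : linear (@gl R n m k).
Proof. by move=> a Y Y'; rewrite -{1}[Y]gtripleK -{1}[Y']gtripleK -gtripleP glK. Qed.

Lemma gbrE z v x z' v' x' :
  gb (gt z v x) (gt z' v' x') = gt (beta v v') (act x v' - act x' v) (br x x').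
Proof. by rewrite /gbr !gVK !glK. Qed.

Lemma gbr_linr X : linear (gb X).
Proof.
move=> a Y Y'; rewrite /gbr (gV_linear a Y Y') (gl_linear a Y Y') -gtripleP.
rewrite (bilinDr beta_bilin) (bilinZr beta_bilin) (bilinDr act_bilin).
rewrite (bilinZr act_bilin) (bilinDl act_bilin) (bilinZl act_bilin).
by rewrite (bilinDr br_bilin) (bilinZr br_bilin) scalerBr opprD addrACA.
Qed.

Lemma gbr_linl Y : linear (gb^~ Y).
Proof.
move=> a X X'; rewrite /gbr (gV_linear a X X') (gl_linear a X X') -gtripleP.
rewrite (bilinDl beta_bilin) (bilinZl beta_bilin) (bilinDr act_bilin).
rewrite (bilinZr act_bilin) (bilinDl act_bilin) (bilinZl act_bilin).
by rewrite (bilinDl br_bilin) (bilinZl br_bilin) scalerBr opprD addrACA.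
Qed.

(* [(ad X)^2 = 0] gives [e^(t ad X) = 1 + t ad X], which must preserve the
   invariant pointed generating set. *)
Lemma admissible_ad_sqr0 : admissible br act beta ->
  forall X, (forall Y, gb X (gb X Y) = 0) -> forall Y, gb X Y = 0.
Proof.
move=> [C [_ _ C_noline C_span C_inv]] X adX2.
have adXE Y : Y *m ad gb X = gb X Y := adE Y (gbr_linr X).
suff adX0 : ad gb X = 0 by move=> Y; rewrite -adXE adX0 mulmx0.
apply: (unipotent_invariant_trivial C_noline C_span) => t u Cu.
have adtX : ad gb (t *: X) = t *: ad gb X.
  apply/row_matrixP => i; rewrite !rowE (adE _ (gbr_linr _)) -scalemxAr adXE.
  by rewrite (linZ (gbr_linl _)).
have adX_sqr0 : ad gb X *m ad gb X = 0.
  by apply/row_matrixP => i; rewrite row0 !rowE mulmxA !adXE adX2.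
rewrite -expmx_sqr0 -?adtX; last first.
  by rewrite adtX -scalemxAl -scalemxAr adX_sqr0 !scaler0.
by apply: C_inv Cu; rewrite -[expmx _]mul1mx; apply/InnExp/Inn1.
Qed.

End LieAlgebraG.

Section Representation.
Variables (R : realType) (n m k : nat).
Variables (br : 'rV[R]_n -> 'rV[R]_n -> 'rV[R]_n)
  (act : 'rV[R]_n -> 'rV[R]_m -> 'rV[R]_m)
  (beta : 'rV[R]_m -> 'rV[R]_m -> 'rV[R]_k).
Hypotheses (br_bilin : bilinear_map br) (act_bilin : bilinear_map act)
  (beta_bilin : bilinear_map beta).
Hypothesis act_br : forall x y v, act (br x y) v = act x (act y v) - act y (act x v).
Hypothesis beta_inv : forall x v w, beta (act x v) w + beta v (act x w) = 0.

Local Notation rho x := (lin1_mx (act x)).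

Lemma rhoE x v : v *m rho x = act x v.
Proof. exact: (mul_rV_lin1 (linear_pack (bilin_linr act_bilin x))). Qed.

Lemma rho_linear : linear (fun x => rho x).
Proof.
move=> a x x'; apply/row_matrixP => i.
by rewrite !rowE mulmxDr -scalemxAr !rhoE (bilin_linl act_bilin).
Qed.

Lemma rho_br x y : rho (br y x) = rho x *m rho y - rho y *m rho x.
Proof.
apply/row_matrixP => i.
by rewrite !rowE mulmxBr !mulmxA !rhoE act_br.
Qed.

Lemma rho_ad_pow x y j :
  rho (x *m ad br y ^+ j) = iter j (fun S => S *m rho y - rho y *m S) (rho x).
Proof.
elim: j => [|j IH]; first by rewrite expr0 mulmx1.
rewrite exprSr -[_ * _]/(_ *m _) mulmxA (adE _ (bilin_linr br_bilin y)).
by rewrite rho_br IH.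
Qed.

Lemma rho_expmx_ad x y :
  rho (x *m expmx (ad br y)) = expmx (- rho y) *m rho x *m expmx (rho y).
Proof.
pose f (M : 'M[R]_n) := rho (x *m M).
pose Phi (P Q : 'M[R]_m) := P *m rho x *m Q.
have f_lin : linear f.
  by move=> a M M'; rewrite /f mulmxDr -scalemxAr rho_linear.
have Phi_linl Q : linear (Phi^~ Q).
  by move=> a P P'; rewrite /Phi !mulmxDl -!scalemxAl.
have Phi_linr P : linear (Phi P).
  by move=> a Q Q'; rewrite /Phi mulmxDr -scalemxAr.
have series_eq : series (f \o expmx_term (ad br y)) = series (fun j =>
    \sum_(0 <= a < j.+1) Phi (expmx_term (- rho y) a) (expmx_term (rho y) (j - a))).
  apply: funext => p; rewrite /series /=; apply: eq_bigr => j _.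
  rewrite /expmx_term (linZ f_lin) /f rho_ad_pow iter_commutator scaler_sumr.
  apply: eq_big_nat => a /andP[_ aj].
  by rewrite /Phi -!scalemxAl -scalemxAr !scalerA fact_inv_binomial.
have := linear_expmx_cvg (A := ad br y) f_lin; rewrite series_eq => f_cvg.
rewrite -[LHS]/(f (expmx _)) -[RHS]/(Phi (expmx _) (expmx _)).
rewrite -(cvg_lim (@norm_hausdorff _ _) f_cvg).
by rewrite (cvg_lim (@norm_hausdorff _ _) (bilinear_expmx_cvg Phi_linl Phi_linr)).
Qed.

(* Invariance of [beta] makes [- rho y] the [beta]-adjoint of [rho y]. *)
Lemma beta_expmx_adjoint y u w :
  beta (u *m expmx (- rho y)) w = beta u (w *m expmx (rho y)).
Proof.
apply: (bilinear_adjoint_expmx beta_bilin) => {}u {}w.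
rewrite mulmxN rhoE !rhoE (bilinNl beta_bilin).
by apply/eqP; rewrite eq_sym -addr_eq0 addrC beta_inv.
Qed.

(* The [z]-component of [[v, [v, x]]]. *)
Definition dbracket v x := beta v (- act x v).

Lemma W_lE Cz x : W_l br act beta Cz x <-> forall v, Cz (dbracket v x).
Proof.
have bracketE v : gbr br act beta (gtriple 0 v 0)
    (gbr br act beta (gtriple 0 v 0) (gtriple 0 0 x)) = gtriple (dbracket v x) 0 0.
  rewrite [gbr _ _ _ _ (gtriple 0 0 x)]gbrE (bilin0r beta_bilin).
  rewrite (bilin0l act_bilin) (bilin0l br_bilin) sub0r gbrE.
  by rewrite !(bilin0l act_bilin) subrr (bilin0l br_bilin).
split=> [W_x v | Cz_x v].
  by have [c Cz_c] := W_x v; rewrite bracketE => /gtriple_inj[-> _ _].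
by exists (dbracket v x) => //; rewrite bracketE.
Qed.

Lemma dbracket_linear v : linear (dbracket v).
Proof.
move=> a x y; rewrite /dbracket (bilin_linl act_bilin) opprD -scalerN.
exact: (bilin_linr beta_bilin).
Qed.

Lemma dbracket_expmx_ad v x y :
  dbracket v (x *m expmx (ad br y)) = dbracket (v *m expmx (- rho y)) x.
Proof.
rewrite /dbracket -!rhoE rho_expmx_ad !mulmxA -mulNmx.
by rewrite -beta_expmx_adjoint.
Qed.

Lemma W_l_convex_cone Cz : convex_cone Cz -> convex_cone (W_l br act beta Cz).
Proof.
move=> [Cz0 CzD CzZ]; split.
- apply/W_lE => v.
  by rewrite /dbracket (bilin0l act_bilin) oppr0 (bilin0r beta_bilin).
- move=> x y /W_lE Wx /W_lE Wy; apply/W_lE => v.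
  by rewrite (linD (dbracket_linear v)); apply: CzD.
- move=> a x a_ge0 /W_lE Wx; apply/W_lE => v.
  by rewrite (linZ (dbracket_linear v)); apply: CzZ.
Qed.

Lemma W_l_closed Cz : closed Cz -> closed (W_l br act beta Cz).
Proof.
move=> Cz_closed.
have -> : W_l br act beta Cz = \bigcap_(v in [set: 'rV[R]_m]) (dbracket v @^-1` Cz).
  apply/seteqP; split => x; first by move=> /W_lE W_x v _; apply: W_x.
  by move=> W_x; apply/W_lE => v; apply: W_x.
apply: closed_bigI => v _; apply: preimage_closed => //.
by move=> x _; exact: (linear_mx_continuous (dbracket_linear v)).
Qed.

Lemma W_l_Inn_invariant Cz : Inn_invariant br (W_l br act beta Cz).
Proof.
have W_expmx x y : W_l br act beta Cz x -> W_l br act beta Cz (x *m expmx (ad br y)).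
  by move=> /W_lE W_x; apply/W_lE => v; rewrite dbracket_expmx_ad.
move=> g + Inn_g; elim: Inn_g => [|g' y _ IH|g' y _ IH] x W_x.
- by rewrite mulmx1.
- by rewrite mulmxA; apply/W_expmx/IH.
- by rewrite invmx_expmx -adN // mulmxA; apply/W_expmx/IH.
Qed.

End Representation.

Section Pointedness.
Variables (R : realType) (n m k : nat).
Variables (br : 'rV[R]_n -> 'rV[R]_n -> 'rV[R]_n)
  (act : 'rV[R]_n -> 'rV[R]_m -> 'rV[R]_m)
  (beta : 'rV[R]_m -> 'rV[R]_m -> 'rV[R]_k).
Hypotheses (br_red : reductive br) (act_mod : is_lie_module br act)
  (beta_inv_skew : is_invariant_skew act beta)
  (g_adm : admissible br act beta) (act_faithful : faithful act).

Let br_bilin : bilinear_map br. Proof. by case: br_red => -[]. Qed.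
Let br_alt : forall x, br x x = 0. Proof. by case: br_red => -[]. Qed.
Let act_bilin : bilinear_map act. Proof. by case: act_mod. Qed.
Let act_br : forall x y v, act (br x y) v = act x (act y v) - act y (act x v).
Proof. by case: act_mod. Qed.
Let beta_bilin : bilinear_map beta. Proof. by case: beta_inv_skew. Qed.
Let beta_skew : forall v w, beta v w = - beta w v. Proof. by case: beta_inv_skew. Qed.
Let beta_inv : forall x v w, beta (act x v) w + beta v (act x w) = 0.
Proof. by case: beta_inv_skew. Qed.

Local Notation gb := (gbr br act beta).
Local Notation gt := (@gtriple R n m k).

(* For [u] in the radical of [beta], [(0, u, 0)] has [ad^2 = 0]. *)
Lemma beta_radical_annihilated u :
  (forall w, beta w u = 0) -> forall y, act y u = 0.
Proof.
move=> u_rad y.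
have adUE Y : gb (gt 0 u 0) Y = gt 0 (- act (gl Y) u) 0.
  rewrite -[in LHS](gtripleK Y) gbrE beta_skew u_rad oppr0.
  by rewrite (bilin0l act_bilin) sub0r (bilin0l br_bilin).
have adU2 Y : gb (gt 0 u 0) (gb (gt 0 u 0) Y) = 0.
  by rewrite !adUE glK (bilin0l act_bilin) oppr0 gtriple0.
have := admissible_ad_sqr0 br_bilin act_bilin beta_bilin g_adm adU2 (gt 0 0 y).
by rewrite adUE glK -gtriple0 => /gtriple_inj[_ /eqP]; rewrite oppr_eq0 => /eqP.
Qed.

Lemma beta_act_polarize x :
  (forall v, beta v (act x v) = 0) -> forall v w, beta w (act x v) = 0.
Proof.
move=> x_iso v w; have := x_iso (v + w).
rewrite (bilinDr act_bilin) (bilinDl beta_bilin) !(bilinDr beta_bilin) !x_iso.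
rewrite add0r addr0.
have -> : beta v (act x w) = beta w (act x v).
  move: (beta_inv x v w); rewrite (beta_skew (act x v)) addrC.
  by move/eqP; rewrite subr_eq0 => /eqP.
by move/eqP; rewrite -mulr2n -scaler_nat scaler_eq0 pnatr_eq0 => /eqP.
Qed.

Definition act_in_radical := [set y | forall v w, beta w (act y v) = 0].

Lemma act_in_radical_ideal : is_ideal br act_in_radical.
Proof.
split; [split|].
- by move=> v w; rewrite (bilin0l act_bilin) (bilin0r beta_bilin).
- move=> y y' y_rad y'_rad v w.
  by rewrite (bilinDl act_bilin) (bilinDr beta_bilin) y_rad y'_rad addr0.
- by move=> a y y_rad v w; rewrite (bilinZl act_bilin) (bilinZr beta_bilin) y_rad scaler0.
- move=> z y y_rad v w; rewrite act_br (beta_radical_annihilated (y_rad v)).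
  by rewrite sub0r (bilinNr beta_bilin) y_rad oppr0.
Qed.

(* [act_in_radical] has a complementary ideal [J]; [x] kills the first summand
   through the faithful action and the second because [[x, J]] lies in
   [act_in_radical] and in [J]. *)
Lemma act_in_radical_central x : act_in_radical x -> forall y, br x y = 0.
Proof.
move=> x_rad y; have [[_ _ _] br_compl] := br_red.
have [J [J_ideal radJ0 rad_J]] := br_compl _ act_in_radical_ideal.
have [a [b [a_rad Jb ->]]] := rad_J y.
have br_anti z z' : br z z' = - br z' z.
  apply/eqP; rewrite -addr_eq0; move/eqP: (br_alt (z + z')).
  by rewrite (bilinDl br_bilin) !(bilinDr br_bilin) !br_alt add0r addr0.
have xa0 : br x a = 0.
  apply: act_faithful => v; rewrite act_br.
  rewrite !(beta_radical_annihilated (a_rad _)).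
  by rewrite (beta_radical_annihilated (x_rad _)) subr0.
have xb0 : br x b = 0.
  apply: radJ0; last by case: J_ideal => _; apply.
  move=> v w; rewrite br_anti (bilinNl act_bilin) (bilinNr beta_bilin).
  by have [_ rad_ideal] := act_in_radical_ideal; rewrite rad_ideal ?oppr0.
by rewrite (bilinDr br_bilin) xa0 xb0 addr0.
Qed.

Lemma act_in_radical_eq0 x : act_in_radical x -> x = 0.
Proof.
move=> x_rad; have x_central := act_in_radical_central x_rad.
have adXE Y : gb (gt 0 0 x) Y = gt 0 (act x (gV Y)) 0.
  rewrite -[in LHS](gtripleK Y) gbrE (bilin0l beta_bilin) (bilin0r act_bilin).
  by rewrite subr0 x_central.
have adX2 Y : gb (gt 0 0 x) (gb (gt 0 0 x) Y) = 0.
  by rewrite !adXE gVK (beta_radical_annihilated (x_rad _)) gtriple0.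
apply: act_faithful => v.
have := admissible_ad_sqr0 br_bilin act_bilin beta_bilin g_adm adX2 (gt 0 v 0).
by rewrite adXE gVK -gtriple0 => /gtriple_inj[].
Qed.

Lemma W_l_pointed Cz : pointed_cone Cz -> pointed_cone (W_l br act beta Cz).
Proof.
move=> Cz_pointed x /(W_lE br_bilin act_bilin beta_bilin) W_x.
move=> /(W_lE br_bilin act_bilin beta_bilin) W_Nx.
apply/act_in_radical_eq0/beta_act_polarize => v.
have := Cz_pointed _ (W_x v).
rewrite -(linN (dbracket_linear act_bilin beta_bilin v)) => /(_ (W_Nx v)) /eqP.
by rewrite /dbracket (bilinNr beta_bilin) oppr_eq0 => /eqP.
Qed.

End Pointedness.

Theorem lemma3p16 (R : realType) (n m k : nat)
  (br : 'rV[R]_n -> 'rV[R]_n -> 'rV[R]_n)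
  (act : 'rV[R]_n -> 'rV[R]_m -> 'rV[R]_m)
  (beta : 'rV[R]_m -> 'rV[R]_m -> 'rV[R]_k) :
  reductive br ->
  is_lie_module br act ->
  is_invariant_skew act beta ->
  admissible br act beta ->
  faithful act ->
  forall Cz : set 'rV[R]_k,
    convex_cone Cz -> pointed_cone Cz -> closed Cz ->
    let W := W_l br act beta Cz in
    [/\ convex_cone W, pointed_cone W, closed W & Inn_invariant br W].
Proof.
move=> br_red act_mod beta_inv_skew g_adm act_faithful Cz Cz_cone Cz_pointed Cz_closed W.
have [[br_bilin _ _] _] := br_red; have [act_bilin act_br] := act_mod.
have [beta_bilin _ beta_inv] := beta_inv_skew.
split.
- exact: W_l_convex_cone.
- exact: W_l_pointed.
- exact: W_l_closed.
- exact: W_l_Inn_invariant.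
Qed.
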